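(* Let $f$ be smooth and bistable (there is $\alpha\in(0,1)$ with $f(0)=f(\alpha)=f(1)=0$, $f'(0),f'(1)<0<f'(\alpha)$, $f>0$ on $(-\infty,0)\cup(\alpha,1)$, $f<0$ on $(0,\alpha)\cup(1,\infty)$) and $\tau_m=1/\sup_{[0,1]}|f'|$. Set $\delta_+=-f'(1)>0$, $\delta_-=-f'(0)>0$ and $$\chi_0:=\tfrac12\min\{\delta_+,\delta_-\}>0.$$ For $\tau\in(0,\tau_m)$ let $c=c_\ast(\tau)$ be the speed of the traveling wave of $u_t=v_x+f(u)$, $\tau v_t=u_x-v$ connecting $(0,0)$ to $(1,0)$, and $b_\pm=1+\tau\delta_\pm$. Then for all $\tau\in(0,\tau_m)$, every $\xi\in\mathbb{R}$ and every $\lambda\in\mathbb{C}$ satisfying one of the dispersion relations $$\xi^2-ic\xi(b_\pm+2\tau\lambda)+(1-c^2\tau)(\tau\lambda^2+b_\pm\lambda+\delta_\pm)=0$$ satisfies $\mathrm{Re}\,\lambda<-\chi_0<0$.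
   Context: The roots $\lambda=\lambda^\pm_{1,2}(\xi)$ of the dispersion relations describe the algebraic curves on which the constant-coefficient limit systems at $x\to\pm\infty$ have purely imaginary spatial eigenvalues $i\xi$. *)

From Stdlib Require Import Reals.
From Coquelicot Require Import Coquelicot.
Open Scope R_scope.

Definition smooth (f : R -> R) : Prop :=
  forall (n : nat) (x : R), ex_derive_n f n x.

Definition bistable (f : R -> R) : Prop :=
  exists alpha : R, 0 < alpha < 1 /\
    f 0 = 0 /\ f alpha = 0 /\ f 1 = 0 /\
    Derive f 0 < 0 /\ Derive f 1 < 0 /\ 0 < Derive f alpha /\
    (forall x, x < 0 -> 0 < f x) /\
    (forall x, alpha < x < 1 -> 0 < f x) /\
    (forall x, 0 < x < alpha -> f x < 0) /\
    (forall x, 1 < x -> f x < 0).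

Definition sup_abs_deriv (f : R -> R) : R :=
  real (Lub_Rbar (fun y => exists x, 0 <= x <= 1 /\ y = Rabs (Derive f x))).

Definition tau_m (f : R -> R) : R := / sup_abs_deriv f.

Definition delta_plus (f : R -> R) : R := - Derive f 1.
Definition delta_minus (f : R -> R) : R := - Derive f 0.
Definition chi0 (f : R -> R) : R := / 2 * Rmin (delta_plus f) (delta_minus f).

(* (u,v)(x,t) = (U,V)(x - c t) is a traveling wave of
   u_t = v_x + f(u),  tau v_t = u_x - v
   connecting (0,0) (at -infinity) to (1,0) (at +infinity). *)
Definition traveling_wave (f : R -> R) (tau c : R) (U V : R -> R) : Prop :=
  (forall z, ex_derive U z) /\ (forall z, ex_derive V z) /\
  (forall z, - c * Derive U z = Derive V z + f (U z)) /\
  (forall z, - c * tau * Derive V z = Derive U z - V z) /\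
  is_lim U m_infty 0 /\ is_lim V m_infty 0 /\
  is_lim U p_infty 1 /\ is_lim V p_infty 0.

Definition wave_speed (f : R -> R) (tau c : R) : Prop :=
  exists U V : R -> R, traveling_wave f tau c U V.

Definition dispersion (tau c b delta xi : R) (lam : C) : C :=
  (RtoC (xi ^ 2) - Ci * RtoC (c * xi) * (RtoC b + RtoC (2 * tau) * lam)
   + RtoC (1 - c ^ 2 * tau) * (RtoC tau * lam * lam + RtoC b * lam + RtoC delta))%C.

(* Completing the square in [lam] turns the dispersion relation into
   [w ^ 2 = a ^ 2 (1 - tau delta) ^ 2 - 4 tau xi ^ 2] with [a = 1 - c ^ 2 tau] and
   [w = a (2 tau lam + 1 + tau delta) - 2 i c tau xi].  A complex number whose square is
   real and at most [r ^ 2] has real part at most [|r|], so [|2 tau Re lam + 1 + tau delta|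
   <= 1 - tau delta], i.e. [Re lam <= - delta], as soon as [a <> 0] and [tau delta <= 1].
   The latter follows from [tau < tau_m].  For the former, if [c ^ 2 tau = 1] the wave
   system collapses to the first-order equation [U' (1 - tau f'(U)) = - c tau f(U)], along
   which [c (U - s) U' >= 0] near each stable zero [s] of [f].  For [c > 0] the profile can
   then never leave [1] going backwards from [+oo], for [c < 0] never leave [0] going
   forwards from [-oo]; either way it is constant, contradicting the boundary limits. *)
From Stdlib Require Import Reals Lra Psatz.
From Coquelicot Require Import Coquelicot.
Open Scope R_scope.

Lemma dispersion_complete_square (tau c delta xi : R) (lam : C) :
  let a := 1 - c ^ 2 * tau in
  let w := (RtoC a * (RtoC (2 * tau) * lam + RtoC (1 + tau * delta))
            - Ci * RtoC (2 * c * tau * xi))%C in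
  (RtoC (4 * tau * a) * dispersion tau c (1 + tau * delta) delta xi lam
   = w * w + RtoC (4 * tau * xi ^ 2 - (a * (1 - tau * delta)) ^ 2))%C.
Proof.
  destruct lam as [x y]; unfold dispersion.
  apply injective_projections; simpl; ring.
Qed.

Lemma Re_sq_le (w : C) (r : R) :
  0 <= r -> Im (w * w) = 0 -> Re (w * w) <= r -> Re w ^ 2 <= r.
Proof. destruct w as [p q]; simpl; nra. Qed.

Lemma dispersion_root_Re_le (tau c delta xi : R) (lam : C) :
  0 < tau -> tau * delta <= 1 -> c ^ 2 * tau <> 1 ->
  dispersion tau c (1 + tau * delta) delta xi lam = RtoC 0 ->
  Re lam <= - delta.
Proof.
  intros Htau Hdelta Hc Hlam.
  pose proof (dispersion_complete_square tau c delta xi lam) as E; cbv zeta in E.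
  rewrite Hlam, Cmult_0_r in E.
  set (a := 1 - c ^ 2 * tau) in E.
  set (w := (RtoC a * (RtoC (2 * tau) * lam + RtoC (1 + tau * delta))
             - Ci * RtoC (2 * c * tau * xi))%C) in E.
  assert (Hw : Re w ^ 2 <= (a * (1 - tau * delta)) ^ 2).
  { apply Re_sq_le; [apply pow2_ge_0 | |];
      revert E; generalize (w * w)%C as ww; intros ww E.
    - apply (f_equal Im) in E; simpl in E; unfold Im; lra.
    - apply (f_equal Re) in E; simpl in E; unfold Re; nra. }
  replace (Re w) with (a * (2 * tau * Re lam + 1 + tau * delta)) in Hw
    by (unfold w; destruct lam; simpl; ring).
  assert (Ha : 0 < a ^ 2).
  { rewrite <- Rsqr_pow2; apply Rsqr_pos_lt; unfold a; intro h; apply Hc; lra. }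
  assert (Hsq : (2 * tau * Re lam + 1 + tau * delta) ^ 2 <= (1 - tau * delta) ^ 2) by nra.
  assert (2 * tau * Re lam + 1 + tau * delta <= 1 - tau * delta).
  { pose proof (Rle_or_lt (2 * tau * Re lam + 1 + tau * delta) (1 - tau * delta)); nra. }
  nra.
Qed.

Lemma continuity_pt_ball (g : R -> R) (x e : R) :
  continuity_pt g x -> 0 < e ->
  exists d, 0 < d /\ forall y, Rabs (y - x) < d -> Rabs (g y - g x) < e.
Proof.
  intros Hg He.
  destruct (proj1 (continuity_pt_locally g x) Hg (mkposreal e He)) as [d Hd].
  exists d; split; [apply cond_pos | exact Hd].
Qed.

Lemma last_exit (g : R -> R) (a b eta : R) :
  a < b -> (forall z, a <= z <= b -> continuity_pt g z) ->
  eta <= g a -> g b < eta ->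
  exists w, a <= w < b /\ eta <= g w /\ forall z, w < z <= b -> g z < eta.
Proof.
  intros Hab Hg Ha Hb.
  set (S := fun z => a <= z <= b /\ eta <= g z).
  destruct (completeness S) as [w [Hub Hlub]].
  - exists b; intros z [Hz _]; lra.
  - exists a; split; lra.
  assert (Haw : a <= w) by (apply Hub; split; lra).
  assert (Hwb : w <= b) by (apply Hlub; intros z [Hz _]; lra).
  assert (Hafter : forall z, w < z <= b -> g z < eta).
  { intros z Hz. destruct (Rlt_or_le (g z) eta) as [h | h]; [exact h |].
    assert (z <= w) by (apply Hub; split; lra). lra. }
  assert (Hgw : eta <= g w).
  { destruct (Rle_or_lt eta (g w)) as [h | h]; [exact h | exfalso].
    destruct (continuity_pt_ball g w (eta - g w) (Hg w ltac:(lra))) as [d [Hd Hball]];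
      [lra |].
    assert (w <= w - d / 2); [| lra].
    apply Hlub; intros s [Hs Hgs].
    destruct (Rle_or_lt s (w - d / 2)) as [h' | h']; [exact h' | exfalso].
    assert (s <= w) by (apply Hub; split; assumption).
    assert (Hsw : Rabs (s - w) < d) by (rewrite Rabs_left1; lra).
    specialize (Hball s Hsw); apply Rabs_def2 in Hball; lra. }
  exists w; split; [split; [exact Haw |] | split; [exact Hgw | exact Hafter]].
  destruct Hwb as [h | h]; [exact h | subst w; lra].
Qed.

Lemma nonpos_of_lim_p_infty (g dg : R -> R) (eps : R) :
  0 < eps -> (forall z, is_derive g z (dg z)) ->
  (forall z, g z < eps -> 0 <= dg z) ->
  is_lim g p_infty 0 -> forall z, g z <= 0.
Proof.
  intros Heps Hd Hincr Hlim z0.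
  destruct (Rle_or_lt (g z0) 0) as [h | Hz0]; [exact h | exfalso].
  set (eta := Rmin (g z0) eps).
  assert (Heta : 0 < eta) by (apply Rmin_pos; lra).
  assert (Heta_g : eta <= g z0) by apply Rmin_l.
  assert (Heta_eps : eta <= eps) by apply Rmin_r.
  apply is_lim_spec in Hlim.
  destruct (Hlim (mkposreal eta Heta)) as [M HM]; simpl in HM.
  set (b := Rmax M z0 + 1).
  pose proof (Rmax_l M z0); pose proof (Rmax_r M z0).
  assert (Hgb : g b < eta)
    by (specialize (HM b ltac:(unfold b; lra)); apply Rabs_def2 in HM; lra).
  destruct (last_exit g z0 b eta) as [w [Hw [Hgw Hafter]]];
    [unfold b; lra | | lra | exact Hgb |].
  { intros z _. apply continuity_pt_filterlim, (ex_derive_continuous g).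
    eexists; apply Hd. }
  destruct (MVT_cor2 g dg w b) as [th [Hmvt Hth]]; [lra | |].
  { intros z _; apply is_derive_Reals, Hd. }
  assert (0 <= dg th) by (apply Hincr; specialize (Hafter th ltac:(lra)); lra).
  nra.
Qed.

Lemma nonpos_of_lim_m_infty (g dg : R -> R) (eps : R) :
  0 < eps -> (forall z, is_derive g z (dg z)) ->
  (forall z, g z < eps -> dg z <= 0) ->
  is_lim g m_infty 0 -> forall z, g z <= 0.
Proof.
  intros Heps Hd Hdecr Hlim z.
  rewrite <- (Ropp_involutive z).
  apply (nonpos_of_lim_p_infty (fun t => g (- t)) (fun t => - dg (- t)) eps Heps).
  - intro t.
    replace (- dg (- t)) with (scal (-1) (dg (- t)))
      by (unfold scal; simpl; unfold mult; simpl; ring).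
    apply (is_derive_comp g (fun x => - x)); [apply Hd |].
    auto_derive; [exact I | ring].
  - intros t Ht. specialize (Hdecr (- t) Ht). lra.
  - apply (is_lim_comp g Ropp p_infty 0 m_infty Hlim).
    + apply (is_lim_opp (fun t => t) p_infty p_infty), is_lim_id.
    + exists 0; intros t _; discriminate.
Qed.

Lemma stable_zero_ball (f : R -> R) (s : R) :
  (forall x, ex_derive f x) -> continuity_pt (Derive f) s -> Derive f s < 0 ->
  exists r, 0 < r /\ forall u, Rabs (u - s) < r ->
    Derive f u < 0 /\ (u - s) * (f u - f s) <= 0.
Proof.
  intros Hf Hcont Hs.
  destruct (continuity_pt_ball (Derive f) s (- Derive f s) Hcont) as [r [Hr Hball]]; [lra |].
  assert (Hneg : forall u, Rabs (u - s) < r -> Derive f u < 0).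
  { intros u Hu. specialize (Hball u Hu). apply Rabs_def2 in Hball. lra. }
  exists r; split; [exact Hr |]. intros u Hu; split; [exact (Hneg u Hu) |].
  destruct (MVT_gen f s u (Derive f)) as [th [Hth Hmvt]].
  - intros x _. apply Derive_correct, Hf.
  - intros x _. apply continuity_pt_filterlim, (ex_derive_continuous f), Hf.
  - assert (Hth_s : Rabs (th - s) < r).
    { pose proof (Rabs_def2 _ _ Hu).
      destruct (Rle_or_lt s u).
      - rewrite Rmin_left, Rmax_right in Hth by lra. apply Rabs_def1; lra.
      - rewrite Rmin_right, Rmax_left in Hth by lra. apply Rabs_def1; lra. }
    specialize (Hneg th Hth_s). rewrite Hmvt.
    pose proof (pow2_ge_0 (u - s)). nra.
Qed.

Lemma traveling_wave_profile_eq (f : R -> R) (tau c : R) (U V : R -> R) :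
  (forall x, ex_derive f x) -> c ^ 2 * tau = 1 -> traveling_wave f tau c U V ->
  forall z, Derive U z * (1 - tau * Derive f (U z)) = - c * tau * f (U z).
Proof.
  intros Hf Hc [HU [HV [E1 [E2 _]]]].
  assert (HcV : forall z, c * V z = - f (U z)).
  { intro z. specialize (E1 z); specialize (E2 z).
    assert (HcV : c * V z = c * Derive U z + c ^ 2 * tau * Derive V z) by nra.
    rewrite Hc in HcV. lra. }
  assert (HcDV : forall z, c * Derive V z = - (Derive f (U z) * Derive U z)).
  { intro z. rewrite <- Derive_scal, (Derive_ext _ _ z HcV).
    apply is_derive_unique. auto_derive; [auto |].
    change (fun x => U x) with U; change (fun x => f x) with f; ring. }
  intro z. specialize (E2 z); specialize (HcV z); specialize (HcDV z).
  assert (HVz : V z = - c * tau * f (U z)).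
  { replace (V z) with (c ^ 2 * tau * V z) by (rewrite Hc; ring).
    replace (- c * tau * f (U z)) with (c * tau * - f (U z)) by ring.
    rewrite <- HcV; ring. }
  rewrite <- HVz.
  assert (tau * (c * Derive V z) = - tau * (Derive f (U z) * Derive U z))
    by (rewrite HcDV; ring).
  lra.
Qed.

Section ProfileNearStableZero.

Variables (f U : R -> R) (tau c s : R).
Hypothesis tau_gt0 : 0 < tau.
Hypothesis f_derivable : forall x, ex_derive f x.
Hypothesis U_derivable : forall z, ex_derive U z.
Hypothesis Derive_f_cont : continuity_pt (Derive f) s.
Hypothesis f_s : f s = 0.
Hypothesis Derive_f_s : Derive f s < 0.
Hypothesis profile_eq :
  forall z, Derive U z * (1 - tau * Derive f (U z)) = - c * tau * f (U z).

Lemma profile_monotone_near_stable_zero :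
  exists r, 0 < r /\ forall z, (U z - s) ^ 2 < r ^ 2 -> 0 <= c * ((U z - s) * Derive U z).
Proof.
  destruct (stable_zero_ball f s f_derivable Derive_f_cont Derive_f_s) as [r [Hr Hball]].
  exists r; split; [exact Hr |]. intros z Hz.
  assert (Hdist : Rabs (U z - s) < r).
  { rewrite <- (Rabs_pos_eq r) by lra. apply Rsqr_lt_abs_0.
    rewrite !Rsqr_pow2; exact Hz. }
  destruct (Hball (U z) Hdist) as [Hf' Hsign]. rewrite f_s, Rminus_0_r in Hsign.
  specialize (profile_eq z).
  assert (Hpos : 0 < 1 - tau * Derive f (U z)) by nra.
  assert (E : c * ((U z - s) * Derive U z) * (1 - tau * Derive f (U z))
              = - (c ^ 2 * tau) * ((U z - s) * f (U z)))
    by (transitivity (c * (U z - s) * (Derive U z * (1 - tau * Derive f (U z))));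
        [ring | rewrite profile_eq; ring]).
  assert (0 <= c ^ 2 * tau) by (pose proof (pow2_ge_0 c); nra).
  nra.
Qed.

Let dist_sq_derive (z : R) :
  is_derive (fun t => (U t - s) ^ 2) z (2 * (U z - s) * Derive U z).
Proof.
  auto_derive; [apply U_derivable |].
  change (fun x => U x) with U; ring.
Qed.

Let dist_sq_lim (x : Rbar) : is_lim U x s -> is_lim (fun t => (U t - s) ^ 2) x 0.
Proof.
  intro Hlim.
  replace 0 with ((s - s) ^ 2) by ring.
  apply (is_lim_comp_continuous U (fun u => (u - s) ^ 2)); [exact Hlim |].
  apply (ex_derive_continuous (fun u => (u - s) ^ 2)); auto_derive; exact I.
Qed.

Lemma profile_const_of_lim_p_infty :
  0 < c -> is_lim U p_infty s -> forall z, U z = s.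
Proof.
  intros Hc Hlim z.
  destruct profile_monotone_near_stable_zero as [r [Hr Hmono]].
  assert (Hz : (U z - s) ^ 2 <= 0).
  { apply (nonpos_of_lim_p_infty _ _ (r ^ 2) ltac:(nra) dist_sq_derive).
    - intros t Ht. specialize (Hmono t Ht). nra.
    - exact (dist_sq_lim p_infty Hlim). }
  nra.
Qed.

Lemma profile_const_of_lim_m_infty :
  c < 0 -> is_lim U m_infty s -> forall z, U z = s.
Proof.
  intros Hc Hlim z.
  destruct profile_monotone_near_stable_zero as [r [Hr Hmono]].
  assert (Hz : (U z - s) ^ 2 <= 0).
  { apply (nonpos_of_lim_m_infty _ _ (r ^ 2) ltac:(nra) dist_sq_derive).
    - intros t Ht. specialize (Hmono t Ht). nra.
    - exact (dist_sq_lim m_infty Hlim). }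
  nra.
Qed.

End ProfileNearStableZero.

Lemma traveling_wave_speed_sq_neq (f : R -> R) (tau c : R) (U V : R -> R) :
  0 < tau -> (forall x, ex_derive f x) ->
  continuity_pt (Derive f) 0 -> continuity_pt (Derive f) 1 ->
  f 0 = 0 -> f 1 = 0 -> Derive f 0 < 0 -> Derive f 1 < 0 ->
  traveling_wave f tau c U V -> c ^ 2 * tau <> 1.
Proof.
  intros Htau Hf Hcont0 Hcont1 F0 F1 D0 D1 Hw Hc.
  pose proof (traveling_wave_profile_eq f tau c U V Hf Hc Hw) as Hprofile.
  destruct Hw as [HU [_ [_ [_ [LimU_m [_ [LimU_p _]]]]]]].
  destruct (Rtotal_order c 0) as [Hneg | [Hzero | Hpos]].
  - pose proof (profile_const_of_lim_m_infty f U tau c 0 Htau Hf HU Hcont0 F0 D0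
                  Hprofile Hneg LimU_m) as HU0.
    apply is_lim_unique in LimU_p.
    rewrite <- (Lim_ext U (fun _ => 0) p_infty HU0), Lim_const in LimU_p.
    injection LimU_p; lra.
  - subst c; simpl in Hc; lra.
  - pose proof (profile_const_of_lim_p_infty f U tau c 1 Htau Hf HU Hcont1 F1 D1
                  Hprofile Hpos LimU_p) as HU1.
    apply is_lim_unique in LimU_m.
    rewrite <- (Lim_ext U (fun _ => 1) m_infty HU1), Lim_const in LimU_m.
    injection LimU_m; lra.
Qed.

Lemma tau_mul_abs_Derive_lt_1 (f : R -> R) (tau x : R) :
  0 <= x <= 1 -> 0 < tau < tau_m f -> tau * Rabs (Derive f x) < 1.
Proof.
  intros Hx [Htau Htau_m]. unfold tau_m, sup_abs_deriv in Htau_m.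
  set (E := fun y => exists x, 0 <= x <= 1 /\ y = Rabs (Derive f x)) in *.
  destruct (Lub_Rbar_correct E) as [Hub _].
  pose proof (Hub _ (ex_intro _ x (conj Hx eq_refl))) as Hle.
  destruct (Lub_Rbar E) as [s | |]; simpl in *.
  - assert (Hs : 0 < s).
    { destruct (Rtotal_order s 0) as [h | [h | h]]; [| subst s; rewrite Rinv_0 in Htau_m; lra | exact h].
      pose proof (Rinv_lt_0_compat s h); lra. }
    assert (tau * s < 1).
    { apply (Rmult_lt_compat_r s) in Htau_m; [| exact Hs].
      rewrite Rinv_l in Htau_m; lra. }
    nra.
  - rewrite Rinv_0 in Htau_m; lra.
  - contradiction.
Qed.

Theorem lemma3p12 (f : R -> R) :
  smooth f -> bistable f ->
  forall tau : R, 0 < tau < tau_m f ->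
  forall c : R, wave_speed f tau c ->
  forall (xi : R) (lam : C),
    (dispersion tau c (1 + tau * delta_plus f) (delta_plus f) xi lam = RtoC 0 \/
     dispersion tau c (1 + tau * delta_minus f) (delta_minus f) xi lam = RtoC 0) ->
    Re lam < - chi0 f /\ - chi0 f < 0.
Proof.
  intros Hsmooth Hbistable tau Htau c [U [V Hw]] xi lam Hlam.
  destruct Hbistable as (_ & _ & F0 & _ & F1 & D0 & D1 & _).
  assert (Hf : forall x, ex_derive f x) by exact (Hsmooth 1%nat).
  assert (Hcont : forall x, continuity_pt (Derive f) x).
  { intro x. apply continuity_pt_filterlim, (ex_derive_continuous (Derive f)).
    exact (Hsmooth 2%nat x). }
  assert (Hc : c ^ 2 * tau <> 1)
    by exact (traveling_wave_speed_sq_neq f tau c U V (proj1 Htau) Hf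
                (Hcont 0) (Hcont 1) F0 F1 D0 D1 Hw).
  assert (Hplus : tau * delta_plus f <= 1).
  { pose proof (tau_mul_abs_Derive_lt_1 f tau 1 ltac:(lra) Htau) as Hlt.
    rewrite Rabs_left in Hlt by exact D1. unfold delta_plus; lra. }
  assert (Hminus : tau * delta_minus f <= 1).
  { pose proof (tau_mul_abs_Derive_lt_1 f tau 0 ltac:(lra) Htau) as Hlt.
    rewrite Rabs_left in Hlt by exact D0. unfold delta_minus; lra. }
  pose proof (Rmin_l (delta_plus f) (delta_minus f)).
  pose proof (Rmin_r (delta_plus f) (delta_minus f)).
  assert (0 < Rmin (delta_plus f) (delta_minus f))
    by (apply Rmin_pos; unfold delta_plus, delta_minus; lra).
  unfold chi0; split; [| lra].
  destruct Hlam as [Hlam | Hlam].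
  - pose proof (dispersion_root_Re_le _ _ _ _ _ (proj1 Htau) Hplus Hc Hlam); lra.
  - pose proof (dispersion_root_Re_le _ _ _ _ _ (proj1 Htau) Hminus Hc Hlam); lra.
Qed.
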